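(* Let $G$ be a connected triangle-free graph with no full star-cutset which is not a path on at most $4$ vertices. Then every subdivision $G^*$ of $G$ is a connected triangle-free graph with no full star-cutset.
   Context: A full star-cutset of a connected graph $G$ is a set $N[u]=\{u\}\cup N(u)$ whose removal disconnects $G$. A subdivision of a graph is obtained by replacing edges by paths. *)

From mathcomp Require Import all_boot.
Set Implicit Arguments. Unset Strict Implicit. Unset Printing Implicit Defensive.

Section Graphs.
Variable T : finType.
Implicit Types (e : rel T).

Definition simple_graph e : Prop := symmetric e /\ irreflexive e.

Definition connected_graph e : Prop :=
  0 < #|T| /\ forall x y : T, connect e x y.

Definition triangle_free e : Prop :=
  forall x y z : T, ~ [&& e x y, e y z & e x z].

Definition closed_nbhd e (u : T) : {set T} := [set v | (v == u) || e u v].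

Definition rel_minus e (S : {set T}) : rel T :=
  [rel a b | [&& e a b, a \notin S & b \notin S]].

Definition full_star_cutset e (u : T) : Prop :=
  exists x y : T, [/\ x \notin closed_nbhd e u, y \notin closed_nbhd e u
                    & ~~ connect (rel_minus e (closed_nbhd e u)) x y].

Definition has_full_star_cutset e : Prop := exists u, full_star_cutset e u.

Definition consecutive (s : seq T) (x y : T) : Prop :=
  exists i, i.+1 < size s /\ nth x s i = x /\ nth x s i.+1 = y.

Definition is_path_graph e : Prop :=
  exists s : seq T, [/\ uniq s, (forall x, x \in s) &
     forall x y, e x y <-> (consecutive s x y \/ consecutive s y x)].

End Graphs.

(* f (on T') is a subdivision of e (on T): there is an injection phi of the
   branch vertices and, for each edge uv of G, a sequence P u v of new internal
   vertices, such that the edge uv is replaced by the path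
   phi u, P u v, phi v; distinct edges get disjoint sets of internal vertices,
   internal vertices are not branch vertices, every vertex of H is a branch
   vertex or internal to some path, and every edge of H is an edge of one
   of these paths.  (Paths of length 1, i.e. P u v = [::], are allowed.) *)
Definition is_subdivision (T T' : finType) (e : rel T) (f : rel T') : Prop :=
  exists (phi : T -> T') (P : T -> T -> seq T'),
  injective phi /\
  [/\ (forall u v, e u v -> P v u = rev (P u v)),
      (forall u v, e u v -> path f (phi u) (rcons (P u v) (phi v))),
      (forall u v, e u v -> uniq (P u v) /\ forall w, phi w \notin P u v),
      (forall u v u' v', e u v -> e u' v' ->
          ~ (u' = u /\ v' = v) -> ~ (u' = v /\ v' = u) ->
          forall x, x \in P u v -> x \notin P u' v') &
      ((forall x : T', (exists w, phi w = x) \/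
                      exists u v, e u v /\ x \in P u v) /\
      (forall a b, f a b -> exists u v, e u v /\
          consecutive (phi u :: rcons (P u v) (phi v)) a b))].

From mathcomp Require Import all_boot zify.
Set Implicit Arguments. Unset Strict Implicit. Unset Printing Implicit Defensive.

(* Being connected, triangle-free, free of full star-cutsets and not a path on at
   most 4 vertices, G has minimum degree at least 2: a vertex of degree at most 1
   forces G to be such a path.  Hence G stays connected after deleting a vertex u
   together with any set of neighbours of u (each remaining neighbour of u still has
   a neighbour outside N[u]), and after deleting an edge uv together with any subset
   of {u, v}.
   In the subdivision, the closed neighbourhood of a branch vertex phi u meets the
   path of an edge not incident to u in at most one end, and the closed
   neighbourhood of an internal vertex w of the path of uv lies on that path.  So
   every vertex outside N[w] walks along its own path to a branch vertex outside
   N[w], and two such branch vertices are joined by lifting a walk of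
   G - ({u} + D), D the neighbours joined to u by an unsubdivided edge, resp. of
   G - X - uv, X the ends of uv in N[w].  A triangle of the subdivision can only
   consist of branch vertices, hence is a triangle of G. *)

Section Walks.
Variable T : finType.
Implicit Types (r : rel T) (K : {set T}) (s : seq T).

Lemma rel_minus_sym r K : symmetric r -> symmetric (rel_minus r K).
Proof. by move=> rsym x y; rewrite /rel_minus /= rsym; congr andb; exact: andbC. Qed.

Lemma connect_closed r (S : pred T) x y :
  (forall z w, S z -> r z w -> S w) -> S x -> connect r x y -> S y.
Proof.
move=> closedS + /connectP [p + ->]; elim: p x => [|z p IH] x //= Sx /andP [rxz rp].
exact: IH (closedS _ _ Sx rxz) rp.
Qed.

Lemma connect_minus_nth r K x0 s i j :
  (forall k, k.+1 < size s -> r (nth x0 s k) (nth x0 s k.+1)) ->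
  i <= j < size s -> (forall k, i <= k <= j -> nth x0 s k \notin K) ->
  connect (rel_minus r K) (nth x0 s i) (nth x0 s j).
Proof.
move=> step /andP [+ hj]; elim: j hj => [|j IH] hj hij hK.
  by have -> : i = 0 by lia.
case: (eqVneq i j.+1) => [-> //|nij].
apply: connect_trans (IH (ltnW hj) _ _) (connect1 _); first lia.
  by move=> k hk; apply: hK; lia.
by rewrite /rel_minus /= step // !hK //; lia.
Qed.

Lemma consecutive_rev s x y : consecutive (rev s) x y -> consecutive s y x.
Proof.
case=> i [+ [hx hy]]; rewrite size_rev => hi.
rewrite !nth_rev in hx hy; try lia.
exists (size s - i.+2); split; first lia.
have -> : (size s - i.+2).+1 = size s - i.+1 by lia.
by rewrite !(set_nth_default x) //; lia.
Qed.

Lemma consecutiveP s x y : uniq s ->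
  consecutive s x y <-> [/\ x \in s, y \in s & index y s = (index x s).+1].
Proof.
move=> us; split=> [[i [hi [hx hy]]] | [xs ys hxy]].
  have hi' : i < size s by lia.
  by split; [rewrite -hx | rewrite -hy | rewrite -hx -hy]; rewrite ?mem_nth // ?index_uniq.
exists (index x s); rewrite -hxy index_mem.
by rewrite !nth_index.
Qed.

Lemma path_graph_seq (e : rel T) (x0 : T) s :
  symmetric e -> irreflexive e -> uniq s -> (forall x, x \in s) ->
  (forall i j, i < j < size s -> e (nth x0 s i) (nth x0 s j) = (j == i.+1)) ->
  is_path_graph e /\ #|T| <= size s.
Proof.
move=> esym eirr us alls adj; split; last first.
  by apply: leq_trans (card_size s); apply: subset_leq_card; apply/subsetP => y.
exists s; split=> // x y; rewrite !consecutiveP // !alls.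
have idx z : nth x0 s (index z s) = z by rewrite nth_index.
have lt z : index z s < size s by rewrite index_mem.
case: (ltngtP (index x s) (index y s)) => hxy.
- rewrite -(idx x) -(idx y) adj ?idx ?hxy ?lt //.
  by split=> [/eqP|[[_ _ ->]|[_ _ hyx]]] //; [left | lia].
- rewrite esym -(idx x) -(idx y) adj ?idx ?hxy ?lt //.
  by split=> [/eqP|[[_ _ hyx]|[_ _ ->]]] //; [right | lia].
- rewrite (index_inj x0 (alls x) (alls y) hxy) eirr.
  by split=> // -[[_ _]|[_ _]]; lia.
Qed.

Lemma connect_through_image (T' : Type) (r : rel T) (g : T' -> T) (A : pred T) (B : pred T') :
  connect_sym r -> (forall z, A z -> exists2 c, B c & connect r z (g c)) ->
  (forall c d, B c -> B d -> connect r (g c) (g d)) ->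
  forall x y, A x -> A y -> connect r x y.
Proof.
move=> rsym reach linked x y Ax Ay.
have [c Bc xc] := reach x Ax; have [d Bd yd] := reach y Ay.
by apply: connect_trans xc (connect_trans (linked c d Bc Bd) _); rewrite rsym.
Qed.

End Walks.

Section SimpleGraph.
Variables (T : finType) (e : rel T).
Hypotheses (esym : symmetric e) (eirr : irreflexive e).

Lemma adj_neq a b : e a b -> a != b.
Proof. by apply: contraTneq => ->; rewrite eirr. Qed.

Definition delete_edge (E : {set T}) : rel T := [rel a b | e a b && ([set a; b] != E)].

Lemma delete_edge_sym E : symmetric (delete_edge E).
Proof. by move=> a b; rewrite /delete_edge /= esym setUC. Qed.

Definition star_connected : Prop :=
  forall u (D : {set T}), {subset D <= e u} -> forall x y,
    x \notin u |: D -> y \notin u |: D -> connect (rel_minus e (u |: D)) x y.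

Definition edge_connected : Prop :=
  forall u v (X : {set T}), e u v -> X \subset [set u; v] -> forall x y,
    x \notin X -> y \notin X -> connect (rel_minus (delete_edge [set u; v]) X) x y.

Hypothesis etf : triangle_free e.

Lemma no_triangle a b c : e a b -> e b c -> e a c -> False.
Proof. by move=> hab hbc hac; apply: (etf (x := a) (y := b) (z := c)); rewrite hab hbc hac. Qed.

Hypothesis no_cutset : ~ has_full_star_cutset e.

Lemma connect_minus_closed_nbhd u x y :
  x \notin closed_nbhd e u -> y \notin closed_nbhd e u ->
  connect (rel_minus e (closed_nbhd e u)) x y.
Proof. by move=> hx hy; apply/negPn/negP => hxy; apply: no_cutset; exists u, x, y. Qed.

Lemma outside_closed_nbhd_eq u x y :
  x \notin closed_nbhd e u -> (forall z, e x z -> z \in closed_nbhd e u) ->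
  y \notin closed_nbhd e u -> y = x.
Proof.
move=> hx hNx hy; apply/eqP.
apply: (connect_closed (S := pred1 x)) (connect_minus_closed_nbhd hx hy); last exact: eqxx.
by move=> z w /= /eqP -> /and3P [/hNx ->].
Qed.

Hypothesis connected : connected_graph e.

Lemma isolated_path_graph x : (forall y, ~~ e x y) -> is_path_graph e /\ #|T| <= 1.
Proof.
move=> iso; have all_x y : y = x.
  apply/eqP; apply: (connect_closed (S := pred1 x)) (connected.2 x y); last exact: eqxx.
  by move=> z w /= /eqP ->; rewrite (negbTE (iso w)).
apply: (path_graph_seq (x0 := x) (s := [:: x])) => //= [y|i j /andP [hij hj]]; last lia.
by rewrite (all_x y) inE eqxx.
Qed.

Lemma small_path_graph (x0 : T) s : uniq s -> (forall y, y \in s) -> size s <= 4 ->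
  (forall i j, i < j < size s -> e (nth x0 s i) (nth x0 s j) = (j == i.+1)) ->
  is_path_graph e /\ #|T| <= 4.
Proof.
move=> us alls s4 adj; have [? small] := path_graph_seq esym eirr us alls adj.
by split=> //; apply: leq_trans small s4.
Qed.

Lemma leaf_cover l u c : e l u -> (forall z, e l z -> z = u) -> e u c -> c != l ->
  forall y, (y == l) || (y \in closed_nbhd e c).
Proof.
move=> hlu leaf huc ncl y.
case: (boolP (y \in closed_nbhd e c)) => hy; first by rewrite orbT.
apply/orP; left; apply/eqP; apply: (outside_closed_nbhd_eq (u := c)) hy.
  by rewrite inE negb_or eq_sym ncl esym; apply/negP => /leaf E; rewrite E eirr in huc.
by move=> z /leaf ->; rewrite inE esym huc orbT.
Qed.

Lemma leaf_path_graph_ge3 l u c :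
  e l u -> (forall z, e l z -> z = u) -> e u c -> c != l -> is_path_graph e /\ #|T| <= 4.
Proof.
move=> hlu leaf huc ncl; have nlu := adj_neq hlu.
have hlc : e l c = false by apply/negP => /leaf E; rewrite E eirr in huc.
have hcl : e c l = false by rewrite esym.
have near_c := leaf_cover hlu leaf huc ncl.
have nbr_u y : e u y -> (y == l) || (y == c).
  move=> huy; case/orP: (near_c y) => [-> // | ]; rewrite inE => /orP [-> | hcy].
    by rewrite orbT.
  by case: (no_triangle huc hcy huy).
case: (pickP [pred d | e c d && (d != u)]) => [d /andP [hcd ndu] | only_u]; last first.
  have all_luc y : [|| y == l, y == u | y == c].
    case/orP: (near_c y) => [-> // | ]; rewrite inE => /orP [-> | hcy]; first by rewrite !orbT.
    by move: (only_u y); rewrite /= hcy /= => /negbFE ->; rewrite orbT.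
  apply: (small_path_graph (x0 := l) (s := [:: l; u; c])) => //= [|y|].
  - by rewrite !inE !negb_or nlu (eq_sym l c) ncl (adj_neq huc).
  - by rewrite !inE.
  - by move=> [|[|i]] [|[|[|j]]] //=; lia.
have hud : e u d = false.
  by apply/negP => /nbr_u /orP [/eqP E | /eqP E]; [rewrite E hcl in hcd | rewrite E eirr in hcd].
have hld : e l d = false by apply/negP => /leaf E; rewrite E eqxx in ndu.
have near_u y : (y == d) || (y \in closed_nbhd e u).
  case: (boolP (y \in closed_nbhd e u)) => hy; first by rewrite orbT.
  apply/orP; left; apply/eqP; apply: (outside_closed_nbhd_eq (u := u)) hy.
    by rewrite inE negb_or ndu hud.
  move=> z hdz; case/orP: (near_c z) => [/eqP E | ]; first by rewrite E esym hld in hdz.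
  rewrite !inE => /orP [/eqP -> | hcz]; first by rewrite huc orbT.
  by case: (no_triangle hcd hdz hcz).
have all_lucd y : [|| y == l, y == u, y == c | y == d].
  case/orP: (near_u y) => [-> | ]; first by rewrite !orbT.
  by rewrite inE => /orP [-> | /nbr_u /orP [-> | ->]]; rewrite ?orbT.
apply: (small_path_graph (x0 := l) (s := [:: l; u; c; d])) => //= [|y|].
- have nld : l != d by apply: contraFneq hcl => ->.
  by rewrite !inE !negb_or nlu (eq_sym l c) ncl nld (adj_neq huc) (eq_sym u d) ndu (adj_neq hcd).
- by rewrite !inE.
- by move=> [|[|[|i]]] [|[|[|[|j]]]] //=; rewrite ?hlc ?hld ?hud //; lia.
Qed.

Lemma leaf_path_graph l u : e l u -> (forall z, e l z -> z = u) ->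
  is_path_graph e /\ #|T| <= 4.
Proof.
move=> hlu leaf; have nlu := adj_neq hlu.
case: (pickP [pred c | e u c && (c != l)]) => [c /andP [huc ncl] | only_l].
  exact: leaf_path_graph_ge3 huc ncl.
have all_lu y : (y == l) || (y == u).
  apply: (connect_closed (S := [pred z | (z == l) || (z == u)])) (connected.2 l y);
    last by rewrite /= eqxx.
  move=> z w /= /orP [/eqP -> /leaf -> | /eqP -> huw]; first by rewrite eqxx orbT.
  by move: (only_l w); rewrite /= huw /= => /negbFE ->.
apply: (small_path_graph (x0 := l) (s := [:: l; u])) => //= [|y|]; first by rewrite inE nlu.
  by rewrite !inE.
by move=> [|i] [|[|j]] //=; lia.
Qed.

Hypothesis not_small_path : ~ (is_path_graph e /\ #|T| <= 4).

Lemma other_neighbour x v : exists2 y, e x y & y != v.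
Proof.
case: (pickP [pred y | e x y && (y != v)]) => [y /andP [] | only_v]; first by exists y.
exfalso; apply: not_small_path; case: (boolP (e x v)) => hxv.
  apply: (leaf_path_graph hxv) => z hxz; apply/eqP.
  by move: (only_v z); rewrite /= hxz => /negbFE.
have [pg small] : is_path_graph e /\ #|T| <= 1.
  apply: (isolated_path_graph (x := x)) => y; apply/negP => hxy.
  by move: (only_v y) hxv; rewrite /= hxy => /negbFE /eqP <-; rewrite hxy.
by split=> //; apply: leq_trans small _.
Qed.

Lemma star_connected_of_no_cutset : star_connected.
Proof.
move=> u D sDu; set K := closed_nbhd e u.
have outside z : z \notin K -> z \notin u |: D.
  rewrite !inE; apply: contra => /orP [-> // | /sDu].
  by rewrite unfold_in => ->; rewrite orbT.
apply: (connect_through_image (g := id) (B := [pred r | r \notin K])).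
- exact: sym_connect_sym (rel_minus_sym _ esym).
- move=> z hz; case: (boolP (z \in K)) => hzK; last by exists z.
  have huz : e u z by move: hzK hz; rewrite !inE => /orP [/eqP -> | //]; rewrite eqxx.
  have [r hzr nru] := other_neighbour z u.
  have hrK : r \notin K by rewrite inE negb_or nru; apply/negP => /(no_triangle huz hzr).
  by exists r => //; apply: connect1; rewrite /rel_minus /= hzr hz outside.
- move=> c d hc hd; apply: connect_sub (connect_minus_closed_nbhd hc hd) => a b.
  by move=> /and3P [hab ha hb]; apply: connect1; rewrite /rel_minus /= hab !outside.
Qed.

Lemma edge_connected_of_no_cutset : edge_connected.
Proof.
move=> u v X huv /subsetP sXuv; set D := X :\ u.
(* Delete the star u + D instead: u itself, if kept, leaves along an edge other than uv. *)
have sDu : {subset D <= e u}.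
  move=> z /setD1P [nzu /sXuv]; rewrite !inE (negbTE nzu) /= => /eqP ->.
  by rewrite unfold_in.
have outside z : z \notin u |: D -> (z != u) && (z \notin X).
  by rewrite in_setU1 in_setD1; case: (z == u); case: (z \in X).
have other_edge a b : u \notin [set a; b] -> [set a; b] != [set u; v].
  by apply: contra => /eqP ->; rewrite set21.
apply: (connect_through_image (g := id) (B := [pred r | r \notin u |: D])).
- exact: sym_connect_sym (rel_minus_sym _ (delete_edge_sym _)).
- move=> z; case: (eqVneq z u) => [-> hz | nzu hz]; last first.
    by exists z; [rewrite /= in_setU1 in_setD1 (negbTE nzu) (negbTE hz) | exact: connect0].
  have [r hur nrv] := other_neighbour u v.
  have nru : r != u by rewrite eq_sym adj_neq.
  have nrX : r \notin X by apply: contra nru => /sXuv; rewrite !inE (negbTE nrv) orbF.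
  exists r; first by rewrite /= in_setU1 in_setD1 (negbTE nru) (negbTE nrX).
  apply: connect1; rewrite /rel_minus /delete_edge /= hur hz nrX !andbT /=.
  apply: contra nrv => /eqP E.
  by have := set22 u r; rewrite E !inE (negbTE nru).
- move=> c d hc hd; apply: connect_sub (star_connected_of_no_cutset sDu hc hd) => a b.
  move=> /and3P [hab /outside /andP [nau naX] /outside /andP [nbu nbX]].
  apply: connect1; rewrite /rel_minus /delete_edge /= hab naX nbX andbT other_edge //.
  by rewrite !inE negb_or !(eq_sym u) nau.
Qed.

End SimpleGraph.

Section Subdivision.
Variables (T T' : finType) (e : rel T) (f : rel T') (phi : T -> T') (P : T -> T -> seq T').
Hypotheses (esym : symmetric e) (eirr : irreflexive e) (fsym : symmetric f) (firr : irreflexive f).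
Hypotheses (phi_inj : injective phi)
  (P_rev : forall u v, e u v -> P v u = rev (P u v))
  (P_path : forall u v, e u v -> path f (phi u) (rcons (P u v) (phi v)))
  (P_uniq : forall u v, e u v -> uniq (P u v) /\ forall w, phi w \notin P u v)
  (P_disjoint : forall u v u' v', e u v -> e u' v' ->
     ~ (u' = u /\ v' = v) -> ~ (u' = v /\ v' = u) -> forall x, x \in P u v -> x \notin P u' v')
  (P_cover : forall x, (exists w, phi w = x) \/ exists u v, e u v /\ x \in P u v)
  (f_edge : forall a b, f a b ->
     exists u v, e u v /\ consecutive (phi u :: rcons (P u v) (phi v)) a b).

Definition edge_path u v := phi u :: rcons (P u v) (phi v).

Lemma phi_notin_P u v w : e u v -> phi w \notin P u v.
Proof. by case/P_uniq. Qed.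

Lemma edge_path_uniq u v : e u v -> uniq (edge_path u v).
Proof.
move=> huv; rewrite /= rcons_uniq mem_rcons inE negb_or !phi_notin_P // andbT.
by rewrite (inj_eq phi_inj) (adj_neq eirr huv); case: (P_uniq huv).
Qed.

Lemma size_edge_path u v : size (edge_path u v) = (size (P u v)).+2.
Proof. by rewrite /= size_rcons. Qed.

Lemma nth_edge_path_last u v x0 : nth x0 (edge_path u v) (size (P u v)).+1 = phi v.
Proof. by rewrite /= nth_rcons ltnn eqxx. Qed.

Lemma edge_path_step u v x0 j : e u v -> j.+1 < size (edge_path u v) ->
  f (nth x0 (edge_path u v) j) (nth x0 (edge_path u v) j.+1).
Proof.
move=> huv; rewrite size_edge_path => hj.
by apply: (pathP x0 (P_path huv)); rewrite size_rcons.
Qed.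

Lemma edge_path_rev u v : e u v -> edge_path v u = rev (edge_path u v).
Proof. by move=> huv; rewrite /edge_path P_rev // rev_cons rev_rcons. Qed.

Lemma mem_edge_path u v y :
  (y \in edge_path u v) = [|| y == phi u, y == phi v | y \in P u v].
Proof. by rewrite inE mem_rcons inE; case: (y == phi u); case: (y == phi v). Qed.

Lemma mem_P_sym u v x : e u v -> x \in P u v -> x \in P v u.
Proof. by move=> huv; rewrite (P_rev huv) mem_rev. Qed.

Lemma index_edge_path_last u v : e u v -> index (phi v) (edge_path u v) = (size (P u v)).+1.
Proof.
move=> huv; rewrite -{1}(nth_edge_path_last u v (phi u)) index_uniq ?edge_path_uniq //.
by rewrite size_edge_path.
Qed.

Lemma index_internal u v y : e u v -> y \in P u v ->
  0 < index y (edge_path u v) <= size (P u v).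
Proof.
move=> huv hy; have yQ : y \in edge_path u v by rewrite mem_edge_path hy !orbT.
have := index_mem y (edge_path u v); rewrite yQ size_edge_path => hlt.
have := nth_index (phi u) yQ; case: (index y _) hlt => [|i] hi hyi.
  by move: hy; rewrite -hyi (negbTE (phi_notin_P _ huv)).
case: (eqVneq i (size (P u v))) => [ei | nei]; last lia.
by move: hy; rewrite -hyi ei nth_edge_path_last (negbTE (phi_notin_P _ huv)).
Qed.

Lemma branch_in_edge_path u v c : e u v -> phi c \in edge_path u v -> c = u \/ c = v.
Proof.
move=> huv; rewrite mem_edge_path (negbTE (phi_notin_P _ huv)) orbF !(inj_eq phi_inj).
by case/orP=> /eqP ->; [left | right].
Qed.

Lemma internal_edge_unique a b u v x : e a b -> e u v -> x \in P a b -> x \in P u v ->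
  (u, v) = (a, b) \/ (u, v) = (b, a).
Proof.
move=> hab huv hxab hxuv.
case: (eqVneq (u, v) (a, b)) => [-> | nuv]; first by left.
case: (eqVneq (u, v) (b, a)) => [-> | nvu]; first by right.
by move: hxuv; rewrite (negbTE (P_disjoint hab huv _ _ hxab)) // => -[eu ev];
  [move: nuv | move: nvu]; rewrite eu ev eqxx.
Qed.

Lemma adj_internal a b x y : e a b -> x \in P a b -> f x y ->
  y \in edge_path a b /\
  (index y (edge_path a b) = (index x (edge_path a b)).+1 \/
   index x (edge_path a b) = (index y (edge_path a b)).+1).
Proof.
move=> hab hx hxy; have [u [v [huv]]] := f_edge hxy; rewrite -/(edge_path u v) => cxy.
have [xQ yQ ixy] := (consecutiveP _ _ (edge_path_uniq huv)).1 cxy.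
have xP : x \in P u v.
  move: xQ; rewrite mem_edge_path => /or3P [/eqP ex | /eqP ex | //];
    by move: hx; rewrite ex (negbTE (phi_notin_P _ hab)).
case: (internal_edge_unique hab huv hx xP) => -[eu ev]; move: cxy yQ ixy; rewrite eu ev.
  by move=> _ yQ ixy; split; [|left].
rewrite edge_path_rev // => /consecutive_rev /(consecutiveP _ _ (edge_path_uniq hab)).
by case=> yQ _ iyx _ _; split; [|right].
Qed.

Lemma adj_branchP a b : reflect (e a b /\ P a b = [::]) (f (phi a) (phi b)).
Proof.
apply: (iffP idP) => [hf | [hab Pab]]; last by have := P_path hab; rewrite Pab /= andbT.
have [u [v [huv]]] := f_edge hf; rewrite -/(edge_path u v).
case/(consecutiveP _ _ (edge_path_uniq huv)) => aQ bQ.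
have i0 : index (phi u) (edge_path u v) = 0 by rewrite /= eqxx.
case: (branch_in_edge_path huv aQ) (branch_in_edge_path huv bQ) => -> [] ->;
  rewrite ?i0 ?index_edge_path_last //; last lia.
by move=> [/size0nil].
Qed.

Lemma adj_edge_path a b y z : e a b -> P a b != [::] ->
  y \in edge_path a b -> z \in edge_path a b -> f y z ->
  index z (edge_path a b) = (index y (edge_path a b)).+1 \/
  index y (edge_path a b) = (index z (edge_path a b)).+1.
Proof.
move=> hab nP yQ zQ hyz.
case: (boolP (y \in P a b)) => yP; first by case: (adj_internal hab yP hyz).
case: (boolP (z \in P a b)) => zP.
  by rewrite fsym in hyz; case: (adj_internal hab zP hyz) => _ [] ->; [right | left].
move: yQ zQ hyz; rewrite !mem_edge_path (negbTE yP) (negbTE zP) !orbF.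
case/orP=> /eqP -> /orP [] /eqP ->; rewrite ?firr // => /adj_branchP [hab' Pab].
  by rewrite Pab in nP.
by move: nP; rewrite (P_rev hab') Pab.
Qed.

Lemma no_triangle_internal a b x y z : e a b -> x \in P a b ->
  f x y -> f x z -> f y z -> False.
Proof.
move=> hab hx hxy hxz hyz; set Q := edge_path a b.
have [yQ iy] := adj_internal hab hx hxy; have [zQ iz] := adj_internal hab hx hxz.
have nP : P a b != [::] by apply: contraTneq hx => ->.
have iyz := adj_edge_path hab nP yQ zQ hyz.
case: (eqVneq (index y Q) (index z Q)) => [eyz | ]; last lia.
by move: hyz; rewrite -(nth_index (phi a) yQ) eyz nth_index // firr.
Qed.

Lemma subdivision_triangle_free : triangle_free e -> triangle_free f.
Proof.
move=> etf x y z /and3P [hxy hyz hxz].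
have [[a ex] | [u [v [huv hx]]]] := P_cover x; subst; last first.
  exact: no_triangle_internal huv hx hxy hxz hyz.
have [[b ey] | [u [v [huv hy]]]] := P_cover y; subst; last first.
  by apply: (no_triangle_internal huv hy _ hyz hxz); rewrite fsym.
have [[c ez] | [u [v [huv hz]]]] := P_cover z; subst; last first.
  by apply: (no_triangle_internal huv hz _ _ hxy); rewrite fsym.
have [[hab _] [hbc _]] := (adj_branchP _ _ hxy, adj_branchP _ _ hyz).
exact: (no_triangle etf hab hbc (proj1 (adj_branchP _ _ hxz))).
Qed.

Lemma connect_edge_path (K : {set T'}) a b i j : e a b -> i <= j < size (edge_path a b) ->
  (forall k, i <= k <= j -> nth (phi a) (edge_path a b) k \notin K) ->
  connect (rel_minus f K) (nth (phi a) (edge_path a b) i) (nth (phi a) (edge_path a b) j).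
Proof. by move=> hab; apply: connect_minus_nth => k; apply: edge_path_step. Qed.

Lemma reach_branch (K : {set T'}) a b z : e a b -> z \in P a b ->
  (forall j, j < size (edge_path a b) ->
     nth (phi a) (edge_path a b) j \in K -> j < index z (edge_path a b)) \/
  (forall j, j < size (edge_path a b) ->
     nth (phi a) (edge_path a b) j \in K -> index z (edge_path a b) < j) ->
  exists2 c, phi c \notin K & connect (rel_minus f K) z (phi c).
Proof.
move=> hab hz; set Q := edge_path a b => side; have zQ : z \in Q by rewrite mem_edge_path hz !orbT.
have := index_internal hab hz; rewrite -/Q => /andP [iz_gt0 iz_le].
have ez : nth (phi a) Q (index z Q) = z := nth_index (phi a) zQ.
case: side => side.
  have out k : index z Q <= k <= (size (P a b)).+1 -> nth (phi a) Q k \notin K.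
    by move=> hk; apply/negP => /side; rewrite size_edge_path; lia.
  exists b; first by rewrite -(nth_edge_path_last a b (phi a)) out //; lia.
  rewrite -{1}ez -(nth_edge_path_last a b (phi a)).
  by apply: connect_edge_path => //; rewrite size_edge_path; lia.
have out k : k <= index z Q -> nth (phi a) Q k \notin K.
  by move=> hk; apply/negP => /side; rewrite size_edge_path; lia.
exists a; first exact: (out 0).
rewrite (sym_connect_sym (rel_minus_sym _ fsym)) -{1}ez.
by apply: (connect_edge_path (i := 0)) => //; rewrite index_mem.
Qed.

Definition endpoint_contact (K : {set T'}) a b :=
  (forall y, y \in edge_path a b -> y \in K -> y = phi a) \/
  (forall y, y \in edge_path a b -> y \in K -> y = phi b).

Lemma reach_branch_contact K a b z : e a b -> z \in P a b -> endpoint_contact K a b ->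
  exists2 c, phi c \notin K & connect (rel_minus f K) z (phi c).
Proof.
move=> hab hz contact; apply: (reach_branch hab hz); set Q := edge_path a b.
have := index_internal hab hz; rewrite -/Q => /andP [iz_gt0 iz_le].
have idx j : j < size Q -> index (nth (phi a) Q j) Q = j.
  by move=> hj; rewrite index_uniq ?edge_path_uniq.
case: contact => only; [left | right] => j hj /(only _ (mem_nth _ hj)) ej.
  by move: (idx j hj); rewrite ej /= eqxx => <-.
by move: (idx j hj); rewrite ej index_edge_path_last // => <-; lia.
Qed.

Lemma edge_path_avoid K a b : endpoint_contact K a b -> phi a \notin K -> phi b \notin K ->
  forall y, y \in edge_path a b -> y \notin K.
Proof.
move=> contact ha hb y yQ; apply/negP => yK.
by case: contact => /(_ y yQ yK) ey; [move: ha | move: hb]; rewrite -ey yK.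
Qed.

Lemma connect_lift (K : {set T'}) (r : rel T) c d :
  (forall a b, r a b -> e a b /\ forall y, y \in edge_path a b -> y \notin K) ->
  connect r c d -> connect (rel_minus f K) (phi c) (phi d).
Proof.
move=> hr /connectP [p]; elim: p c => [|a p IH] c /=; first by move=> _ ->.
case/andP => /hr [hca avoid] rp ed; apply: connect_trans (IH _ rp ed).
rewrite -(nth_edge_path_last c a (phi c)).
apply: (connect_edge_path (i := 0)) => //; first by rewrite size_edge_path; lia.
by move=> k hk; apply/avoid/mem_nth; rewrite size_edge_path; lia.
Qed.

Lemma closed_nbhd_internal_subset u v w y : e u v -> w \in P u v ->
  y \in closed_nbhd f w -> y \in edge_path u v.
Proof.
move=> huv hw; rewrite inE => /orP [/eqP -> | /(adj_internal huv hw) [] //].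
by rewrite mem_edge_path hw !orbT.
Qed.

Lemma closed_nbhd_internal a b w j : e a b -> w \in P a b -> j < size (edge_path a b) ->
  (nth (phi a) (edge_path a b) j \in closed_nbhd f w) =
  [|| j == index w (edge_path a b), j == (index w (edge_path a b)).+1
    | j.+1 == index w (edge_path a b)].
Proof.
move=> hab hw hj; set Q := edge_path a b.
have wQ : w \in Q by rewrite mem_edge_path hw !orbT.
have ew : nth (phi a) Q (index w Q) = w := nth_index _ wQ.
have iw_lt : index w Q < size Q by rewrite index_mem.
have idx k : k < size Q -> index (nth (phi a) Q k) Q = k.
  by move=> hk; rewrite index_uniq ?edge_path_uniq.
rewrite inE; apply/idP/idP.
  case/orP => [/eqP ejw | hwj]; first by rewrite -(idx j hj) ejw eqxx.
  by have [_ []] := adj_internal hab hw hwj; rewrite idx // => ->; rewrite eqxx ?orbT.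
case/or3P => /eqP ej; apply/orP; [left | right | right].
- by rewrite ej ew.
- by rewrite ej -{1}ew; apply: edge_path_step => //; rewrite -ej.
- by rewrite fsym -ew -ej; apply: edge_path_step; rewrite // ej.
Qed.

Lemma internal_nbhd_contact u v w a b : e u v -> w \in P u v -> e a b -> w \notin P a b ->
  endpoint_contact (closed_nbhd f w) a b.
Proof.
move=> huv hw hab nw; set K := closed_nbhd f w.
have interior y : y \in P a b -> y \notin K.
  move=> yP; apply: contra nw => /(closed_nbhd_internal_subset huv hw).
  rewrite mem_edge_path => /or3P [/eqP ey | /eqP ey | yuv];
    try by move: yP; rewrite ey (negbTE (phi_notin_P _ hab)).
  case: (internal_edge_unique hab huv yP yuv) => -[eu ev]; move: hw; rewrite eu ev // => hw.
  by apply: (mem_P_sym _ hw); rewrite esym.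
case: (boolP (phi a \in K)) => ha; [left | right] => y;
  rewrite mem_edge_path => /or3P [/eqP -> | /eqP -> | /interior /negP //] //; last first.
  by rewrite (negbTE ha).
move=> hb; exfalso.
have [ea eb] := (closed_nbhd_internal_subset huv hw ha, closed_nbhd_internal_subset huv hw hb).
case: (branch_in_edge_path huv ea) (branch_in_edge_path huv eb) => ea' [] eb'; subst a b.
- by rewrite eirr in hab.
- by rewrite hw in nw.
- by rewrite (mem_P_sym huv hw) in nw.
- by rewrite eirr in hab.
Qed.

Lemma branch_nbhd_contact u0 a b : triangle_free e -> e a b -> u0 != a -> u0 != b ->
  endpoint_contact (closed_nbhd f (phi u0)) a b.
Proof.
move=> etf hab na nb; set K := closed_nbhd f (phi u0).
have interior y : y \in P a b -> y \notin K.
  move=> yP; rewrite inE negb_or; apply/andP; split.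
    by apply: contraTneq yP => ->; rewrite (negbTE (phi_notin_P _ hab)).
  apply/negP; rewrite fsym => /(adj_internal hab yP) [/(branch_in_edge_path hab) [] e0 _].
    by rewrite e0 eqxx in na.
  by rewrite e0 eqxx in nb.
have branchK c : phi c \in K -> c = u0 \/ e u0 c.
  by rewrite inE => /orP [/eqP/phi_inj -> | /adj_branchP [hu0c _]]; [left | right].
case: (boolP (phi a \in K)) => ha; [left | right] => y;
  rewrite mem_edge_path => /or3P [/eqP -> | /eqP -> | /interior /negP //] //; last first.
  by rewrite (negbTE ha).
move=> hb; exfalso.
case: (branchK _ ha) => [ea | hua]; first by rewrite ea eqxx in na.
case: (branchK _ hb) => [eb | hub]; first by rewrite eb eqxx in nb.
exact: (no_triangle etf hua hab hub).
Qed.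

Lemma branch_nbhd_own_edge u0 b z j : e u0 b -> z \in P u0 b ->
  z \notin closed_nbhd f (phi u0) -> j < size (edge_path u0 b) ->
  nth (phi u0) (edge_path u0 b) j \in closed_nbhd f (phi u0) -> j < index z (edge_path u0 b).
Proof.
move=> hub hz nz hj yK; have /andP [iz_gt0 _] := index_internal hub hz.
have zQ : z \in edge_path u0 b by rewrite mem_edge_path hz !orbT.
have njz : j != index z (edge_path u0 b).
  by apply: contraNneq nz => ej; rewrite -(nth_index (phi u0) zQ) -ej.
suff : j <= 1 by lia.
have iy : index (nth (phi u0) (edge_path u0 b) j) (edge_path u0 b) = j.
  by rewrite index_uniq ?edge_path_uniq.
have i0 : index (phi u0) (edge_path u0 b) = 0 by rewrite /= eqxx.
move: (mem_nth (phi u0) hj) iy yK; set y := nth _ _ j.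
rewrite mem_edge_path inE => /or3P [/eqP -> | /eqP -> | yP] iy /orP [/eqP ey | hy];
  rewrite -?iy ?ey ?i0 //.
  by move/adj_branchP: hy => [_ P0]; rewrite P0 in hz.
by rewrite fsym in hy; have [_ []] := adj_internal hub yP hy; rewrite i0 // => ->.
Qed.

Lemma no_cutset_at_branch u0 : triangle_free e -> star_connected e ->
  forall x y, x \notin closed_nbhd f (phi u0) -> y \notin closed_nbhd f (phi u0) ->
  connect (rel_minus f (closed_nbhd f (phi u0))) x y.
Proof.
move=> etf star; set K := closed_nbhd f (phi u0).
set D := [set c | e u0 c && (P u0 c == [::])].
have phiK c : (phi c \in K) = (c \in u0 |: D).
  rewrite !inE (inj_eq phi_inj) eq_sym; congr (_ || _).
  by apply/adj_branchP/andP => -[-> /eqP ->].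
have reach a b z : e a b -> z \in P a b -> z \notin K -> u0 != b ->
    exists2 c, phi c \notin K & connect (rel_minus f K) z (phi c).
  move=> hab hz nz nb; case: (eqVneq u0 a) => [ea | na].
    by subst a; apply: (reach_branch hab hz); left => j; apply: branch_nbhd_own_edge.
  exact: reach_branch_contact hab hz (branch_nbhd_contact etf hab na nb).
apply: (connect_through_image (g := phi) (B := [pred c | phi c \notin K])).
- exact: sym_connect_sym (rel_minus_sym _ fsym).
- move=> z nz; case: (P_cover z) => [[c ez] | [a [b [hab hz]]]]; first by subst z; exists c.
  case: (eqVneq u0 b) => [eb | nb]; last exact: reach hab hz nz nb.
  apply: (reach b a) => //; first by rewrite esym.
    exact: mem_P_sym hab hz.
  by rewrite eb eq_sym (adj_neq eirr hab).
- move=> c d /= hc hd; rewrite !phiK in hc hd.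
  apply: (connect_lift (r := rel_minus e (u0 |: D))) (star u0 D _ c d hc hd) => [a b|].
    rewrite /rel_minus /= -!phiK => /and3P [hab ha hb]; split=> //.
    apply: (edge_path_avoid _ ha hb); apply: branch_nbhd_contact => //.
      by apply: contraNneq ha => <-; rewrite inE eqxx.
    by apply: contraNneq hb => <-; rewrite inE eqxx.
  by move=> c'; rewrite inE => /andP [].
Qed.

Lemma no_cutset_at_internal u v w : edge_connected e -> e u v -> w \in P u v ->
  forall x y, x \notin closed_nbhd f w -> y \notin closed_nbhd f w ->
  connect (rel_minus f (closed_nbhd f w)) x y.
Proof.
move=> edge huv hw; set K := closed_nbhd f w; set X := [set c | phi c \in K].
apply: (connect_through_image (g := phi) (B := [pred c | phi c \notin K])).
- exact: sym_connect_sym (rel_minus_sym _ fsym).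
- move=> z nz; case: (P_cover z) => [[c ez] | [a [b [hab hz]]]]; first by subst z; exists c.
  case: (boolP (w \in P a b)) => wab; last first.
    exact: reach_branch_contact hab hz (internal_nbhd_contact huv hw hab wab).
  apply: (reach_branch hab hz); set Q := edge_path a b.
  have zQ : z \in Q by rewrite mem_edge_path hz !orbT.
  have iz_lt : index z Q < size Q by rewrite index_mem.
  have := nz; rewrite -{1}(nth_index (phi a) zQ) closed_nbhd_internal // -/Q => nzw.
  by case: (ltnP (index z Q) (index w Q)) => hzw; [right | left] => j hj;
    rewrite closed_nbhd_internal // -/Q; lia.
- move=> c d hc hd; apply: (connect_lift (r := rel_minus (delete_edge e [set u; v]) X)).
    move=> a b /and3P [/andP [hab nuv] ha hb]; split=> //.
    rewrite in_set in ha; rewrite in_set in hb; apply: (edge_path_avoid _ ha hb).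
    apply: (internal_nbhd_contact huv hw hab); apply: contra nuv => wab.
    by case: (internal_edge_unique hab huv wab hw) => -[-> ->]; rewrite // setUC.
  apply: edge => //; [apply/subsetP => c' | by rewrite in_set | by rewrite in_set].
  rewrite inE => /(closed_nbhd_internal_subset huv hw) /(branch_in_edge_path huv).
  by case=> ->; rewrite !inE eqxx ?orbT.
Qed.

Lemma subdivision_no_full_star_cutset :
  triangle_free e -> star_connected e -> edge_connected e -> ~ has_full_star_cutset f.
Proof.
move=> etf star edge [w [x [y [hx hy /negP []]]]].
case: (P_cover w) => [[u0 ew] | [u [v [huv hw]]]]; first by subst w; apply: no_cutset_at_branch.
exact: no_cutset_at_internal huv hw _ _ hx hy.
Qed.

Lemma subdivision_connected : connected_graph e -> connected_graph f.
Proof.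
case=> Tpos Gconn; split.
  by case/card_gt0P: Tpos => t _; apply/card_gt0P; exists (phi t).
move=> x y; apply: (connect_sub (e := rel_minus f set0)) => [a b /andP [hab _] | ].
  exact: connect1.
apply: (connect_through_image (g := phi) (A := predT) (B := predT)) => //.
- exact: sym_connect_sym (rel_minus_sym _ fsym).
- move=> z _; case: (P_cover z) => [[c <-] | [a [b [hab hz]]]]; first by exists c.
  have contact : endpoint_contact set0 a b by left => t _; rewrite inE.
  by have [c _ zc] := reach_branch_contact hab hz contact; exists c.
- move=> c d _ _; apply: (connect_lift (r := e)) (Gconn c d) => a b hab.
  by split=> // t _; rewrite inE.
Qed.

End Subdivision.

Theorem mainTheorem18 (T : finType) (e : rel T) :
  simple_graph e ->
  connected_graph e ->
  triangle_free e ->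
  ~ has_full_star_cutset e ->
  ~ (is_path_graph e /\ #|T| <= 4) ->
  forall (T' : finType) (f : rel T'),
    simple_graph f ->
    is_subdivision e f ->
    [/\ connected_graph f, triangle_free f & ~ has_full_star_cutset f].
Proof.
move=> [esym eirr] conn etf no_cut not_small T' f [fsym firr]
  [phi [P [phi_inj [P_rev P_path P_uniq P_disjoint [P_cover f_edge]]]]].
have star := star_connected_of_no_cutset esym eirr etf no_cut conn not_small.
have edge := edge_connected_of_no_cutset esym eirr etf no_cut conn not_small.
split.
- by apply: (subdivision_connected (phi := phi) (P := P)).
- by apply: (subdivision_triangle_free (phi := phi) (P := P)).
- by apply: (subdivision_no_full_star_cutset (phi := phi) (P := P)).
Qed.
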